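(* Consider the following two-stage zero-sum game between Alice (A) and Bob (B), with a constant $c\in(0,1/3)$. The initial state $X_1$ is uniform on $\{-1,+1\}$; Alice observes $X_1$, Bob observes nothing. At stage 1 Alice chooses $U_1^A\in\{-1,+1\}$ and $X_2=X_1U_1^A$. At stage 2 Bob, observing only $U_1^A$, chooses $U_2^B\in\{\mathrm{U},\mathrm{D}\}$. Alice's rewards are $R_1^A=c$ if $U_1^A=+1$ and $0$ if $U_1^A=-1$; $R_2^A=2$ if $X_2=+1,U_2^B=\mathrm{U}$, $R_2^A=1$ if $X_2=-1,U_2^B=\mathrm{D}$, and $R_2^A=0$ otherwise; Bob's rewards are $R_t^B=-R_t^A$. Then no belief-based equilibrium exists in this game.
   Context: A behavioral strategy profile consists of Alice's map $g_1^A:\{-1,+1\}\to\Delta(\{-1,+1\})$ from $X_1$ to a mixed action and Bob's map $g_2^B:\{-1,+1\}\to\Delta(\{\mathrm{U},\mathrm{D}\})$ from $U_1^A$ to a mixed action; payoffs are expected total rewards; a Bayes–Nash equilibrium (BNE) is a profile where neither player can increase their expected payoff by unilaterally changing strategy. For a profile $g$ and each $u\in\{-1,+1\}$ with $\Pr^g(U_1^A=u)>0$, let $\pi_2^u\in\Delta(\{-1,+1\})$ be the common-information-based belief $\pi_2^u(x)=\Pr^g(X_2=x\mid U_1^A=u)$. A belief-based equilibrium is a BNE $g$ for which there exists a function $\sigma:\Delta(\{-1,+1\})\to\Delta(\{\mathrm{U},\mathrm{D}\})$ with $g_2^B(u)=\sigma(\pi_2^u)$ for every $u$ with $\Pr^g(U_1^A=u)>0$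 (i.e. Bob's stage-2 mixed action depends on his information only through the belief on $X_2$; Bob has no private information, and Alice's stage-1 common-information belief is the fixed prior, so Alice's strategy is unrestricted). *)

From HB Require Import structures.
From mathcomp Require Import all_boot all_order all_algebra.
From mathcomp Require Import reals.
Set Implicit Arguments. Unset Strict Implicit. Unset Printing Implicit Defensive.
Import Order.TTheory GRing.Theory Num.Theory.
Local Open Scope ring_scope.

(* Encoding conventions:
   - a sign in {-1,+1} is a bool: true = +1, false = -1;
     the product of signs x*u is (x == u).
   - Bob's actions {U,D} are a bool: true = U, false = D.
   - a mixed action on a finite set T is a finitely supported function
     p : {ffun T -> R} with p t >= 0 and \sum_t p t = 1. *)

Definition sign_mul (x u : bool) : bool := x == u.

Definition is_dist (R : realType) (T : finType) (p : {ffun T -> R}) : Prop :=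
  (forall t, 0 <= p t) /\ \sum_t p t = 1.

Definition stratA (R : realType) := bool -> {ffun bool -> R}.  (* X_1 -> Delta{-1,+1} *)
Definition stratB (R : realType) := bool -> {ffun bool -> R}.  (* U_1^A -> Delta{U,D} *)

Definition valid_strat (R : realType) (g : bool -> {ffun bool -> R}) : Prop :=
  forall i, is_dist (g i).

Definition rewA1 (R : realType) (c : R) (u1 : bool) : R := if u1 then c else 0.
Definition rewA2 {R : realType} (x2 b : bool) : R :=
  if x2 then (if b then 2 else 0) else (if b then 0 else 1).

Definition payoffA (R : realType) (c : R) (gA : stratA R) (gB : stratB R) : R :=
  \sum_(x1 : bool) \sum_(u1 : bool) \sum_(b : bool)
     (1 / 2) * gA x1 u1 * gB u1 b * (rewA1 c u1 + rewA2 (R:=R) (sign_mul x1 u1) b).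

Definition payoffB (R : realType) (c : R) (gA : stratA R) (gB : stratB R) : R :=
  \sum_(x1 : bool) \sum_(u1 : bool) \sum_(b : bool)
     (1 / 2) * gA x1 u1 * gB u1 b * (- rewA1 c u1 - rewA2 (R:=R) (sign_mul x1 u1) b).

Definition is_BNE (R : realType) (c : R) (gA : stratA R) (gB : stratB R) : Prop :=
  valid_strat gA /\ valid_strat gB /\
  (forall gA' : stratA R, valid_strat gA' -> payoffA c gA' gB <= payoffA c gA gB) /\
  (forall gB' : stratB R, valid_strat gB' -> payoffB c gA gB' <= payoffB c gA gB).

Definition probU (R : realType) (gA : stratA R) (u : bool) : R :=
  \sum_(x1 : bool) (1 / 2) * gA x1 u.

Definition probXU (R : realType) (gA : stratA R) (x u : bool) : R :=
  \sum_(x1 : bool) (if sign_mul x1 u == x then (1 / 2) * gA x1 u else 0).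

Definition belief2 (R : realType) (gA : stratA R) (u : bool) : {ffun bool -> R} :=
  [ffun x => probXU gA x u / probU gA u].

Definition belief_based_equilibrium (R : realType) (c : R)
    (gA : stratA R) (gB : stratB R) : Prop :=
  is_BNE c gA gB /\
  exists sigma : {ffun bool -> R} -> {ffun bool -> R},
    forall u : bool, 0 < probU gA u -> gB u = sigma (belief2 gA u).

(* Bob must be indifferent after both signals: a strict preference of Bob
   fixes his action, and chasing Alice's best reply then contradicts it
   (after U_1^A = +1 this is where c < 1/3 enters).  Bob's indifference
   pins Alice to playing +1 with probability 1/3 at X_1 = +1 and 2/3 at
   X_1 = -1, so both signals induce the belief (1/3, 2/3) on X_2.
   Alice now mixes at both states, and her indifference forces Bob to play U
   with probability 1/3 - c after U_1^A = +1 but 1/3 + c after U_1^A = -1: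
   his stage-2 action cannot be a function of the belief. *)

From mathcomp Require Import all_boot all_order all_algebra.
From mathcomp Require Import reals.
From mathcomp Require Import ring lra.
Set Implicit Arguments. Unset Strict Implicit. Unset Printing Implicit Defensive.
Import Order.TTheory GRing.Theory Num.Theory.
Local Open Scope ring_scope.

Section Distributions.
Variables (R : realType) (T : finType).
Implicit Types (p : {ffun T -> R}) (v : T -> R).

Lemma dist_support_argmax p v t t' :
  is_dist p -> (forall s, v s <= \sum_s' p s' * v s') ->
  0 < p t -> v t' <= v t.
Proof.
move=> [p_ge0 p_sum1] v_le_mean p_t_gt0.
set m := \sum_s' p s' * v s' in v_le_mean *.
have slack0 : \sum_s p s * (m - v s) = 0.
  under eq_bigr do rewrite mulrBr.
  by rewrite sumrB -mulr_suml p_sum1 mul1r subrr.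
have slack_ge0 s : 0 <= p s * (m - v s) by rewrite mulr_ge0 ?subr_ge0.
move: (@psumr_eq0P _ _ _ _ (fun s _ => slack_ge0 s) slack0 t isT) => /eqP.
rewrite mulf_eq0 gt_eqF //= subr_eq0 => /eqP <-.
exact: v_le_mean.
Qed.

Definition pure (t0 : T) : {ffun T -> R} := [ffun t => (t == t0)%:R].

Lemma pure_dist t0 : is_dist (pure t0).
Proof.
split=> [t|]; first by rewrite ffunE ler0n.
by rewrite (bigD1 t0) //= big1 => [|t /negPf]; rewrite ffunE ?eqxx ?addr0 // => ->.
Qed.

Lemma sum_pure t0 v : \sum_t pure t0 t * v t = v t0.
Proof.
rewrite (bigD1 t0) //= big1 => [|t /negPf]; rewrite ffunE ?eqxx ?mul1r ?addr0 //.
by move=> ->; rewrite mul0r.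
Qed.

End Distributions.

Lemma dist_bool_false (R : realType) (q : {ffun bool -> R}) :
  is_dist q -> q false = 1 - q true.
Proof. by case=> _; rewrite big_bool /= => <-; rewrite addrAC subrr add0r. Qed.

Lemma dist_bool_bounds (R : realType) (q : {ffun bool -> R}) :
  is_dist q -> 0 <= q true <= 1.
Proof.
move=> qd; have [q_ge0 _] := qd; have := q_ge0 false.
by rewrite dist_bool_false // q_ge0 /= subr_ge0.
Qed.

Section BestResponse.
Variable R : realType.
Implicit Types (g : bool -> {ffun bool -> R}) (v : bool -> bool -> R).

Definition linear_payoff v g : R := \sum_i \sum_t g i t * v i t.

Definition update g (i0 : bool) (d : {ffun bool -> R}) : bool -> {ffun bool -> R} :=
  fun i => if i == i0 then d else g i.

Lemma valid_update g i0 d :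
  valid_strat g -> is_dist d -> valid_strat (update g i0 d).
Proof. by move=> vg dd i; rewrite /update; case: eqP. Qed.

Section Optimal.
Variables (v : bool -> bool -> R) (g : bool -> {ffun bool -> R}).
Hypothesis g_valid : valid_strat g.
Hypothesis g_opt :
  forall g', valid_strat g' -> linear_payoff v g' <= linear_payoff v g.

Lemma best_response_support i t t' : 0 < g i t -> v i t' <= v i t.
Proof.
apply: dist_support_argmax (g_valid i) _ => s.
have := g_opt (valid_update i g_valid (pure_dist R s)).
rewrite /linear_payoff (bigD1 i) //= [X in _ <= X](bigD1 i) //= /update eqxx.
rewrite sum_pure (eq_bigr (fun j => \sum_t g j t * v j t)) ?lerD2r //.
by move=> j /negPf ->.
Qed.

Lemma bool_best_response i :
  [/\ v i false < v i true -> g i true = 1,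
      v i true < v i false -> g i true = 0
    & 0 < g i true < 1 -> v i true = v i false].
Proof.
have gi_false := dist_bool_false (g_valid i).
have /andP[gi_ge0 gi_le1] := dist_bool_bounds (g_valid i).
have supp t t' := @best_response_support i t t'.
split=> [lt_v | lt_v | /andP[gi_gt0 gi_lt1]].
- have : g i false <= 0 by rewrite leNgt; apply/negP => /(supp _ true); lra.
  lra.
- have : g i true <= 0 by rewrite leNgt; apply/negP => /(supp _ false); lra.
  lra.
- have := supp _ false gi_gt0; have : 0 < g i false by lra.
  move=> /(supp _ true); lra.
Qed.

End Optimal.
End BestResponse.

Section Game.
Variables (R : realType) (c : R).

Definition alice_value (gB : stratB R) (x u : bool) : R :=
  \sum_(b : bool) (1 / 2) * gB u b * (rewA1 c u + rewA2 (R:=R) (sign_mul x u) b).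

Definition bob_value (gA : stratA R) (u b : bool) : R :=
  \sum_(x : bool) (1 / 2) * gA x u * (- rewA1 c u - rewA2 (R:=R) (sign_mul x u) b).

Lemma payoffA_linear gA gB : payoffA c gA gB = linear_payoff (alice_value gB) gA.
Proof.
apply: eq_bigr => x _; apply: eq_bigr => u _; rewrite mulr_sumr.
by apply: eq_bigr => b _; ring.
Qed.

Lemma payoffB_linear gA gB : payoffB c gA gB = linear_payoff (bob_value gA) gB.
Proof.
rewrite /payoffB exchange_big; apply: eq_bigr => u _.
rewrite exchange_big; apply: eq_bigr => b _; rewrite mulr_sumr.
by apply: eq_bigr => x _; ring.
Qed.

Lemma alice_gain_plus gB : valid_strat gB ->
  alice_value gB true true - alice_value gB true false
  = (2 * gB true true + gB false true + c - 1) / 2.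
Proof.
move=> vB; rewrite /alice_value !big_bool /= /rewA1 /rewA2 /sign_mul /=.
by rewrite !dist_bool_false //; field.
Qed.

Lemma alice_gain_minus gB : valid_strat gB ->
  alice_value gB false true - alice_value gB false false
  = (c + 1 - gB true true - 2 * gB false true) / 2.
Proof.
move=> vB; rewrite /alice_value !big_bool /= /rewA1 /rewA2 /sign_mul /=.
by rewrite !dist_bool_false //; field.
Qed.

Lemma bob_gain_plus gA :
  bob_value gA true true - bob_value gA true false
  = - (2 * gA true true - gA false true) / 2.
Proof. by rewrite /bob_value !big_bool /= /rewA1 /rewA2 /sign_mul /=; field. Qed.

Lemma bob_gain_minus gA : valid_strat gA ->
  bob_value gA false true - bob_value gA false false
  = - (1 + gA true true - 2 * gA false true) / 2.
Proof.
move=> vA; rewrite /bob_value !big_bool /= /rewA1 /rewA2 /sign_mul /=.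
by rewrite !dist_bool_false //; field.
Qed.

End Game.

Section Equilibrium.
Variables (R : realType) (c : R) (gA : stratA R) (gB : stratB R).
Hypothesis bne : is_BNE c gA gB.

Let gA_valid : valid_strat gA := proj1 bne.
Let gB_valid : valid_strat gB := proj1 (proj2 bne).

Let alice_opt g' : valid_strat g' ->
  linear_payoff (alice_value c gB) g' <= linear_payoff (alice_value c gB) gA.
Proof. by rewrite -!payoffA_linear; apply: (proj1 (proj2 (proj2 bne))). Qed.

Let bob_opt g' : valid_strat g' ->
  linear_payoff (bob_value c gA) g' <= linear_payoff (bob_value c gA) gB.
Proof. by rewrite -!payoffB_linear; apply: (proj2 (proj2 (proj2 bne))). Qed.

Local Notation a := (gA true true).
Local Notation b := (gA false true).
Local Notation p := (gB true true).
Local Notation r := (gB false true).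

Let probs_in_unit_interval :
  [/\ 0 <= a <= 1, 0 <= b <= 1, 0 <= p <= 1 & 0 <= r <= 1].
Proof. by split; apply: dist_bool_bounds. Qed.

Lemma alice_response_plus :
  [/\ 0 < 2 * p + r + c - 1 -> a = 1, 2 * p + r + c - 1 < 0 -> a = 0
    & 0 < a < 1 -> 2 * p + r + c - 1 = 0].
Proof.
have [to1 to0 mixed] := bool_best_response gA_valid alice_opt true.
have gain := alice_gain_plus c gB_valid.
by split=> [lt|lt|/mixed]; [apply: to1 | apply: to0 |]; lra.
Qed.

Lemma alice_response_minus :
  [/\ 0 < c + 1 - p - 2 * r -> b = 1, c + 1 - p - 2 * r < 0 -> b = 0
    & 0 < b < 1 -> c + 1 - p - 2 * r = 0].
Proof.
have [to1 to0 mixed] := bool_best_response gA_valid alice_opt false.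
have gain := alice_gain_minus c gB_valid.
by split=> [lt|lt|/mixed]; [apply: to1 | apply: to0 |]; lra.
Qed.

Lemma bob_response_plus : (2 * a - b < 0 -> p = 1) /\ (0 < 2 * a - b -> p = 0).
Proof.
have [to1 to0 _] := bool_best_response gB_valid bob_opt true.
have gain := bob_gain_plus c gA.
by split=> lt; [apply: to1 | apply: to0]; lra.
Qed.

Lemma bob_response_minus :
  (1 + a - 2 * b < 0 -> r = 1) /\ (0 < 1 + a - 2 * b -> r = 0).
Proof.
have [to1 to0 _] := bool_best_response gB_valid bob_opt false.
have gain := bob_gain_minus c gA_valid.
by split=> lt; [apply: to1 | apply: to0]; lra.
Qed.

Lemma bob_indifferent_minus : 0 < c -> 1 + a - 2 * b = 0.
Proof.
move=> c_gt0; have [a01 b01 p01 r01] := probs_in_unit_interval.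
have [r_to1 r_to0] := bob_response_minus.
have [a_to1 _ _] := alice_response_plus.
have [b_to1 _ _] := alice_response_minus.
case: (ltrgtP (1 + a - 2 * b) 0) => // gap.
- have r1 := r_to1 gap.
  have : a = 1 by apply: a_to1; lra.
  lra.
- have r0 := r_to0 gap.
  have : b = 1 by apply: b_to1; lra.
  lra.
Qed.

Lemma bob_indifferent_plus : 0 < c -> c < 1 / 3 -> 2 * a - b = 0.
Proof.
move=> c_gt0 c_lt; have [a01 b01 p01 r01] := probs_in_unit_interval.
have [p_to1 p_to0] := bob_response_plus.
have [a_to1 a_to0 _] := alice_response_plus.
have [_ b_to0 _] := alice_response_minus.
have bob_indiff_minus := bob_indifferent_minus c_gt0.
case: (ltrgtP (2 * a - b) 0) => // gap.
- have p1 := p_to1 gap.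
  have : a = 1 by apply: a_to1; lra.
  lra.
- have p0 := p_to0 gap.
  have [gain_lt0 | gain_ge0] := ltP (2 * p + r + c - 1) 0.
    by have := a_to0 gain_lt0; lra.
  (* then r >= 1 - c > 2/3, so -1 is strictly better for Alice at X_1 = -1 *)
  have : b = 0 by apply: b_to0; lra.
  lra.
Qed.

Lemma alice_equilibrium_mix : 0 < c -> c < 1 / 3 -> a = 1 / 3 /\ b = 2 / 3.
Proof.
move=> c_gt0 c_lt.
have := bob_indifferent_plus c_gt0 c_lt.
have := bob_indifferent_minus c_gt0.
lra.
Qed.

Lemma bob_equilibrium_gap : 0 < c -> c < 1 / 3 -> p - r = - 2 * c.
Proof.
move=> c_gt0 c_lt; have [a_eq b_eq] := alice_equilibrium_mix c_gt0 c_lt.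
have [_ _ a_mixed] := alice_response_plus.
have [_ _ b_mixed] := alice_response_minus.
have a_strict : 0 < a < 1 by rewrite a_eq; lra.
have b_strict : 0 < b < 1 by rewrite b_eq; lra.
have := a_mixed a_strict; have := b_mixed b_strict; lra.
Qed.

Lemma equilibrium_signal_prob_gt0 u : 0 < c -> c < 1 / 3 -> 0 < probU gA u.
Proof.
move=> c_gt0 c_lt; have [a_eq b_eq] := alice_equilibrium_mix c_gt0 c_lt.
rewrite /probU !big_bool /=; case: u; rewrite ?dist_bool_false // a_eq b_eq; lra.
Qed.

Lemma equilibrium_beliefs_agree :
  0 < c -> c < 1 / 3 -> belief2 gA true = belief2 gA false.
Proof.
move=> c_gt0 c_lt; have [a_eq b_eq] := alice_equilibrium_mix c_gt0 c_lt.
apply/ffunP => x; rewrite !ffunE /probXU /probU !big_bool /= /sign_mul /=.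
by rewrite !dist_bool_false // a_eq b_eq; case: x => /=; field.
Qed.

End Equilibrium.

Theorem proposition3 (R : realType) (c : R) :
  0 < c -> c < 1 / 3 ->
  ~ (exists (gA : stratA R) (gB : stratB R), belief_based_equilibrium c gA gB).
Proof.
move=> c_gt0 c_lt [gA [gB [bne [sigma gB_sigma]]]].
have gap := bob_equilibrium_gap bne c_gt0 c_lt.
have gB_same : gB true = gB false.
  rewrite !gB_sigma ?(equilibrium_signal_prob_gt0 bne _ c_gt0 c_lt) //.
  by rewrite (equilibrium_beliefs_agree bne c_gt0 c_lt).
by move: gap; rewrite gB_same; lra.
Qed.
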